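(* In Setup A, fix $\tau\in\mathcal{O}$ and for $0\le i\le l-1$ define $H_{\tau,i}:M_{p^i\tau}\to M_{p^{i+1}\tau}$ by $H_{\tau,i}=F$ if $f(p^i\tau^* )\ge f(\tau^* )$ and $H_{\tau,i}=F+V'$ if $f(p^i\tau^* )<f(\tau^* )$. Assume (a) $\dim\big(\pi_\tau\circ H_{\tau,l-1}\circ\cdots\circ H_{\tau,0}(M_\tau)\big)=f(\tau^* )$, and (b) $w_{\tau'}$ is maximal for every $\tau'\in\mathcal{O}$ with $f(\tau'^* )<f(\tau^* )$. Then: (1) $H_{\tau,i}\circ\cdots\circ H_{\tau,0}(M_\tau)=M_{p^{i+1}\tau,f(\tau^* )}$ for all $0\le i\le l-1$; (2) $w_\tau$ is maximal; (3) $w_{\tau'}$ is maximal for every $\tau'\in\mathcal{O}$ with $f(\tau'^* )=f(\tau^* )$.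
   Context: Setup A. Let $k_0=\overline{\mathbb{F}}_p$ with Frobenius $\sigma$. Let $\mathcal{O}$ be a finite set of size $l$ with a cyclic permutation $\tau'\mapsto p\tau'$ (so $\mathcal{O}=\{\tau,p\tau,\dots,p^{l-1}\tau\}$ and $p^l\tau=\tau$). Fix an integer $g\ge1$ and, for each $\tau'\in\mathcal{O}$, non-negative integers $f(\tau')$, $f(\tau'^* )$ with $f(\tau')+f(\tau'^* )=g$ (the notation $f(p^i\tau^* )$ means $f((p^i\tau)^* )$). Let $M=\bigoplus_{\tau'\in\mathcal{O}}M_{\tau'}$ where $M_{\tau'}$ has $k_0$-basis $e_{\tau',1},\dots,e_{\tau',g}$; write $M_{\tau',k}=\mathrm{Span}(e_{\tau',1},\dots,e_{\tau',k})$ and $M_{\tau',a,b}=\mathrm{Span}(e_{\tau',a},\dots,e_{\tau',b})$. For each $\tau'$ fix increasing sequences $j_{\tau',1}<\dots<j_{\tau',f(\tau')}$ and $i_{\tau',1}<\dots<i_{\tau',f(\tau'^* )}$ partitioning $\{1,\dots,g\}$, and let $w_{\tau'}\in\mathrm{Sym}_g$ be given by $w_{\tau'}(j_{\tau',k})=k$, $w_{\tau'}(i_{\tau',k})=f(\tau')+k$. Let $F:M\to M$ be the $\sigma$-semilinear map with $F(e_{\tau',j})=e_{p\tau',\,w_{\tau'}(j)-f(\tau')}$ if $w_{\tau'}(j)>f(\tau')$ and $F(e_{\tau',j})=0$ otherwise. Let $V':M\to M$ be the semilinear map with $V'(e_{\tau',j})=e_{p\tau',\,f(\tau'^* )+w_{\tau'}(j)}$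 if $w_{\tau'}(j)\le f(\tau')$ and $V'(e_{\tau',j})=0$ otherwise. Let $Q_{\tau'}=\mathrm{Span}(e_{\tau',i_{\tau',k}})$, $Q^\vee_{\tau'^*}=\mathrm{Span}(e_{\tau',j_{\tau',k}})$ (so $M_{\tau'}=Q_{\tau'}\oplus Q^\vee_{\tau'^*}$), $Q=\bigoplus Q_{\tau'}$, and $\pi_{\tau'}:M_{\tau'}\to Q_{\tau'}$ the projection with kernel $Q^\vee_{\tau'^*}$. We say $w_{\tau'}$ is maximal if $i_{\tau',k}=k$ for all $1\le k\le f(\tau'^* )$, i.e. $w_{\tau'}(k)=f(\tau')+k$ for $k\le f(\tau'^* )$ and $w_{\tau'}(k)=k-f(\tau'^* )$ for $k>f(\tau'^* )$ (equivalently $\ker F\cap M_{\tau',f(\tau'^* )}=0$; this is the permutation of maximal length). *)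

(* Setup A of the paper, encoded as follows:
   - the orbit O = {tau, p tau, ..., p^(l-1) tau} is modelled by 'I_l, with
     the cyclic permutation tau' |-> p tau' given by ordS (i |-> i+1 mod l);
   - M_{tau'} = k^g is modelled by row vectors 'rV[k]_g; the basis vector
     e_{tau',j} (1-based j) is the unit row vector with index j-1 (0-based);
   - the partition {j_{tau',.}} / {i_{tau',.}} of {1..g} is given by the set
     J tau' of (0-based) positions j_{tau',k};
   - w0 is the 0-based version of w (w0 = w - 1). *)
From HB Require Import structures.
From mathcomp Require Import all_boot all_order all_algebra.
Set Implicit Arguments. Unset Strict Implicit. Unset Printing Implicit Defensive.
Import GRing.Theory.
Local Open Scope ring_scope.

Definition e_nat (k : nzRingType) (g n : nat) : 'rV[k]_g :=
  \row_(m < g) ((m == n :> nat)%:R).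

Definition w0 (g : nat) (J : {set 'I_g}) (f : nat) (j : 'I_g) : nat :=
  if j \in J then #|[set x in J | (x < j)%N]|
  else (f + #|[set x in ~: J | (x < j)%N]|)%N.

(* F : M_{tau'} -> M_{p tau'}, sigma-semilinear:
   F e_j = e_{w(j) - f}  if w(j) > f, and 0 otherwise (1-based) *)
Definition Fmap (k : nzRingType) (sigma : k -> k) (g : nat) (J : {set 'I_g})
  (f : nat) (v : 'rV[k]_g) : 'rV[k]_g :=
  \sum_(j < g) sigma (v 0 j) *:
     (if (f <= w0 J f j)%N then e_nat k g (w0 J f j - f) else 0).

(* V' : M_{tau'} -> M_{p tau'}, sigmaV-semilinear:
   V' e_j = e_{fs + w(j)}  if w(j) <= f, and 0 otherwise (1-based) *)
Definition Vmap (k : nzRingType) (sigmaV : k -> k) (g : nat) (J : {set 'I_g})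
  (f fs : nat) (v : 'rV[k]_g) : 'rV[k]_g :=
  \sum_(j < g) sigmaV (v 0 j) *:
     (if (w0 J f j < f)%N then e_nat k g (fs + w0 J f j) else 0).

Definition Hmap (k : nzRingType) (sigma sigmaV : k -> k) (g l : nat)
  (J : 'I_l -> {set 'I_g}) (f fs : 'I_l -> nat) (tau : 'I_l) (i : nat)
  (v : 'rV[k]_g) : 'rV[k]_g :=
  let t := iter i (@ordS l) tau in
  if (fs tau <= fs t)%N then Fmap sigma (J t) (f t) v
  else Fmap sigma (J t) (f t) v + Vmap sigmaV (J t) (f t) (fs t) v.

Fixpoint Himg (k : nzRingType) (sigma sigmaV : k -> k) (g l : nat)
  (J : 'I_l -> {set 'I_g}) (f fs : 'I_l -> nat) (tau : 'I_l) (n : nat)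
  : 'rV[k]_g -> Prop :=
  match n with
  | 0 => fun _ => True
  | S m => fun u => exists v, Himg sigma sigmaV J f fs tau m v /\
                      u = Hmap sigma sigmaV J f fs tau m v
  end.

(* pi_{tau'} : projection onto Q_{tau'} along Q^vee_{tau'^*} = span(e_j, j in J) *)
Definition proj (k : nzRingType) (g : nat) (J : {set 'I_g}) (v : 'rV[k]_g)
  : 'rV[k]_g := \row_(m < g) (if m \in J then 0 else v 0 m).

Definition dim_is (k : fieldType) (g : nat) (S : 'rV[k]_g -> Prop) (d : nat)
  : Prop :=
  exists A : 'M[k]_(d, g), row_free A /\ forall v, S v <-> (v <= A)%MS.

(* w_{tau'} is maximal (0-based form of w(k) = f + k for k <= fstar,
   w(k) = k - fstar for k > fstar) *)
Definition maximal_w (g : nat) (J : {set 'I_g}) (f fs : nat) : Prop :=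
  forall j : 'I_g,
    ((j < fs)%N -> w0 J f j = (f + j)%N) /\
    ((fs <= j)%N -> w0 J f j = (j - fs)%N).

(* The key
   observation is that F shrinks supports: if v is supported on the first r
   coordinates, then F v is supported on the first (number of positions
   outside J below r) coordinates, while F + V' acts coordinatewise when w is
   maximal.  Following the orbit of tau this yields a non-increasing sequence
   of support bounds [supp_bound n], starting from g and dropping to f(tau^* )
   after the first step.  The dimension hypothesis (a) forces, by a rank
   count, the bound after l steps to be at least f(tau^* ); hence the bound is
   constant along the orbit, and every step with f(p^i tau^* ) >= f(tau^* )
   must fix all the first f(tau^* ) coordinates, i.e. J_{p^i tau} avoids
   them.  Such an avoiding J is exactly a maximal w, and it makes F bijective
   onto the vectors supported on the first f(tau^* ) coordinates (sigma being
   surjective on the algebraically closed k), which gives (1), (2) and (3). *)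
From HB Require Import structures.
From mathcomp Require Import all_boot all_order all_algebra.
Import GRing.Theory.
Set Implicit Arguments. Unset Strict Implicit.
Local Open Scope ring_scope.

Definition supported (k : nzRingType) (g r : nat) (v : 'rV[k]_g) : Prop :=
  forall m : 'I_g, (r <= m)%N -> v 0 m = 0.

Definition avoids (g : nat) (J : {set 'I_g}) (d : nat) : Prop :=
  forall x : 'I_g, (x < d)%N -> x \notin J.

Definition free_below (g : nat) (J : {set 'I_g}) (r : nat) : nat :=
  #|[set x : 'I_g | (x \notin J) && (x < r)%N]|.

Lemma sum_kronecker (k : nzRingType) (g : nat) (a : 'I_g -> k) (m : 'I_g) :
  \sum_(j < g) a j * ((m : nat) == (j : nat))%:R = a m.
Proof.
rewrite (bigD1 m) //= eqxx mulr1 big1 ?addr0 // => j /negbTE hj.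
by rewrite val_eqE eq_sym hj mulr0.
Qed.

Lemma Fmap_coord (k : nzRingType) (sigma : k -> k) (g : nat) (J : {set 'I_g})
  (f : nat) (v : 'rV[k]_g) (m : 'I_g) :
  (Fmap sigma J f v) 0 m = \sum_(j < g) sigma (v 0 j) *
     (if (f <= w0 J f j)%N then ((m : nat) == (w0 J f j - f)%N)%:R else 0).
Proof.
rewrite /Fmap summxE; apply: eq_bigr => j _; rewrite mxE.
by case: ifP => _; rewrite !mxE.
Qed.

Lemma Vmap_coord (k : nzRingType) (sigmaV : k -> k) (g : nat) (J : {set 'I_g})
  (f fs : nat) (v : 'rV[k]_g) (m : 'I_g) :
  (Vmap sigmaV J f fs v) 0 m = \sum_(j < g) sigmaV (v 0 j) *
     (if (w0 J f j < f)%N then ((m : nat) == (fs + w0 J f j)%N)%:R else 0).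
Proof.
rewrite /Vmap summxE; apply: eq_bigr => j _; rewrite mxE.
by case: ifP => _; rewrite !mxE.
Qed.

Lemma card_ord_below (g j : nat) : (j <= g)%N -> #|[set x : 'I_g | (x < j)%N]| = j.
Proof.
move=> hj; rewrite -sum1_card.
rewrite (eq_bigl (fun x : 'I_g => (x < j)%N)); last by move=> x; rewrite inE.
rewrite -(big_ord_widen_cond g (fun _ => true) (fun _ => 1%N) hj) /=.
by rewrite sum1_card card_ord.
Qed.

Lemma card_ord_below_le (g j : nat) : (#|[set x : 'I_g | (x < j)%N]| <= j)%N.
Proof.
case: (leqP j g) => h; first by rewrite card_ord_below.
apply: leq_trans (ltnW h); rewrite -[X in (_ <= X)%N]card_ord; exact: max_card.
Qed.

Lemma free_below_le (g : nat) (J : {set 'I_g}) (r : nat) : (free_below J r <= r)%N.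
Proof.
apply: leq_trans (card_ord_below_le g r); apply: subset_leq_card.
by apply/subsetP => x; rewrite !inE => /andP[].
Qed.

Lemma avoids_of_free_below (g : nat) (J : {set 'I_g}) (d : nat) :
  (d <= g)%N -> free_below J d = d -> avoids J d.
Proof.
move=> hd hfree x hx.
have hsub : [set y : 'I_g | (y \notin J) && (y < d)%N] \subset [set y : 'I_g | (y < d)%N].
  by apply/subsetP => y; rewrite !inE => /andP[].
have /(subset_cardP _) := hsub; rewrite card_ord_below // => /(_ hfree) heq.
have : x \in [set y : 'I_g | (y < d)%N] by rewrite inE.
by rewrite -heq inE => /andP[].
Qed.

Lemma w0_lt_of_mem (g : nat) (J : {set 'I_g}) (f : nat) (j : 'I_g) :
  #|J| = f -> j \in J -> (w0 J f j < f)%N.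
Proof.
move=> hJ hj; rewrite /w0 hj -hJ; apply: proper_card.
apply/properP; split; first by apply/subsetP => x; rewrite inE => /andP[].
by exists j => //; rewrite inE ltnn andbF.
Qed.

Lemma w0_of_avoids (g : nat) (J : {set 'I_g}) (f d : nat) (j : 'I_g) :
  avoids J d -> (j < d)%N -> w0 J f j = (f + j)%N.
Proof.
move=> hd hj; rewrite /w0 (negbTE (hd j hj)); congr (_ + _)%N.
rewrite -[RHS](@card_ord_below g j (ltnW (ltn_ord j))); apply: eq_card => x.
rewrite !inE; case: (ltnP x j) => hx; rewrite ?andbF ?andbT //.
exact: hd (ltn_trans hx hj).
Qed.

(* If J avoids the first f^* positions, its complement is exactly these
   positions, and w is maximal. *)
Lemma maximal_of_avoids (g : nat) (J : {set 'I_g}) (f fs : nat) :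
  avoids J fs -> #|J| = f -> (f + fs)%N = g -> maximal_w J f fs.
Proof.
move=> hd hJ hg.
have hC : ~: J = [set x : 'I_g | (x < fs)%N].
  apply/esym/eqP; rewrite eqEcard; apply/andP; split.
    by apply/subsetP => x; rewrite !inE => /hd.
  by rewrite cardsCs setCK card_ord hJ card_ord_below -hg ?leq_addl // addKn.
have hin (x : 'I_g) : (x \in J) = (fs <= x)%N.
  by rewrite -[x \in J]negbK -in_setC hC inE -leqNgt.
move=> j; split => hj; first exact: (w0_of_avoids _ hd hj).
rewrite /w0 hin hj.
have -> : [set x in J | (x < j)%N] =
    [set x : 'I_g | (x < j)%N] :\: [set x : 'I_g | (x < fs)%N].
  by apply/setP => x; rewrite !inE hin -leqNgt andbC.
rewrite cardsD card_ord_below ?(ltnW (ltn_ord j)) // (setIidPr _) ?card_ord_below //.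
  exact: leq_trans hj (ltnW (ltn_ord j)).
by apply/subsetP => x; rewrite !inE => h; exact: leq_trans h hj.
Qed.

Lemma Fmap_supported (k : nzRingType) (sigma : k -> k) (g : nat) (J : {set 'I_g})
  (f r : nat) (v : 'rV[k]_g) :
  sigma 0 = 0 -> #|J| = f -> supported r v ->
  supported (free_below J r) (Fmap sigma J f v).
Proof.
move=> s0 hJ hv m hm; rewrite Fmap_coord big1 // => j _.
case: (leqP r j) => hj; first by rewrite hv // s0 mul0r.
case: ifP => hf; last by rewrite mulr0.
have hjJ : j \notin J by apply/negP => /(w0_lt_of_mem hJ); rewrite ltnNge hf.
have hlt : (w0 J f j - f < free_below J r)%N.
  rewrite /w0 (negbTE hjJ) addKn; apply: proper_card; apply/properP; split.
    by apply/subsetP => x; rewrite !inE => /andP[-> /ltn_trans ->].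
  by exists j; rewrite !inE ?hjJ ?hj ?ltnn ?andbF.
case: eqP => [he|]; last by rewrite mulr0.
by move: hm; rewrite he leqNgt hlt.
Qed.

Lemma Fmap_avoids (k : nzRingType) (sigma : k -> k) (g : nat) (J : {set 'I_g})
  (f d : nat) (v : 'rV[k]_g) :
  sigma 0 = 0 -> avoids J d -> supported d v ->
  forall m : 'I_g, (Fmap sigma J f v) 0 m = sigma (v 0 m).
Proof.
move=> s0 hd hv m.
rewrite Fmap_coord -[RHS](sum_kronecker (fun j => sigma (v 0 j)) m).
apply: eq_bigr => j _.
case: (leqP d j) => hj; first by rewrite hv // s0 !mul0r.
by rewrite (w0_of_avoids _ hd hj) leq_addr addKn.
Qed.

Lemma FVmap_maximal (k : nzRingType) (sigma sigmaV : k -> k) (g : nat)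
  (J : {set 'I_g}) (f fs : nat) (v : 'rV[k]_g) :
  (f + fs)%N = g -> maximal_w J f fs ->
  forall m : 'I_g, (Fmap sigma J f v + Vmap sigmaV J f fs v) 0 m =
     if (m < fs)%N then sigma (v 0 m) else sigmaV (v 0 m).
Proof.
move=> hg hmax m; rewrite mxE Fmap_coord Vmap_coord -big_split /=.
rewrite -[RHS](sum_kronecker
  (fun j => if (j < fs)%N then sigma (v 0 j) else sigmaV (v 0 j)) m).
apply: eq_bigr => j _; have [h1 h2] := hmax j.
case: (ltnP j fs) => hj.
  by rewrite (h1 hj) leq_addr addKn ltnNge leq_addr /= mulr0 addr0.
have hlt : (j - fs < f)%N by rewrite ltn_subLR // addnC hg.
by rewrite (h2 hj) leqNgt hlt /= mulr0 add0r subnKC.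
Qed.

(* A subspace of dimension d all of whose vectors vanish outside X has
   d <= #|X|: its basis matrix factors through the coordinates in X. *)
Lemma dim_le_card (k : fieldType) (g d : nat) (S : 'rV[k]_g -> Prop) (X : {set 'I_g}) :
  dim_is S d -> (forall u, S u -> forall m, m \notin X -> u 0 m = 0) ->
  (d <= #|X|)%N.
Proof.
move=> [A [hA hS]] hX.
have h0 a m : m \notin X -> A a m = 0.
  by move=> hm; have := hX _ (proj2 (hS _) (row_sub a A)) m hm; rewrite mxE.
pose E : 'M[k]_(#|X|, g) := \matrix_(i, m) ((m == enum_val i)%:R).
pose B : 'M[k]_(d, #|X|) := \matrix_(a, i) A a (enum_val i).
have eqA : A = B *m E.
  apply/matrixP => a m; rewrite !mxE.
  case: (boolP (m \in X)) => hm.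
    rewrite (bigD1 (enum_rank_in hm m)) //= !mxE enum_rankK_in // eqxx mulr1.
    rewrite big1 ?addr0 // => i hi; rewrite !mxE.
    case: eqP => [he|]; last by rewrite mulr0.
    by have := enum_valK_in hm i; rewrite -he => hh; move: hi; rewrite hh eqxx.
  rewrite h0 // big1 // => i _; rewrite !mxE.
  case: eqP => [he|]; last by rewrite mulr0.
  by move: hm; rewrite he enum_valP.
have := mxrankM_maxr B E; rewrite -eqA.
move: hA; rewrite /row_free => /eqP ->.
by move/leq_trans; apply; exact: rank_leq_row.
Qed.

Lemma iter_ordS (l : nat) (tau : 'I_l) (n : nat) :
  val (iter n (@ordS l) tau) = ((tau + n) %% l)%N.
Proof.
elim: n => [|n IH] /=; first by rewrite addn0 modn_small.
by rewrite /ordS /= IH -addn1 modnDml addn1 addnS.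
Qed.

Lemma ordS_orbit (l : nat) (tau t : 'I_l) :
  exists2 n, (n < l)%N & iter n (@ordS l) tau = t.
Proof.
have hl : (0 < l)%N by apply: leq_ltn_trans (ltn_ord tau).
exists ((t + l - tau) %% l)%N; first by rewrite ltn_mod.
apply: val_inj; rewrite iter_ordS /= modnDmr addnBA; last first.
  by apply: leq_trans (ltnW (ltn_ord tau)) (leq_addl _ _).
by rewrite addKn modnDr modn_small.
Qed.

Lemma expr_right_inverse (k : closedFieldType) (n : nat) :
  (0 < n)%N -> exists s : k -> k, cancel s (fun x => x ^+ n).
Proof.
move=> hn.
have root (a : k) : exists x : k, x ^+ n == a.
  have [x hx] := @solve_monicpoly k n (fun i => if i == 0%N then a else 0) hn.
  exists x; rewrite hx; case: n hn {hx} => // n _.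
  by rewrite big_ord_recl /= expr0 mulr1 big1 ?addr0 // => i _; rewrite mul0r.
by exists (fun a => xchoose (root a)) => a; exact/eqP/(xchooseP (root a)).
Qed.

Section Orbit.

Variables (k : nzRingType) (sigma sigmaV : k -> k) (g l : nat).
Variables (f fs : 'I_l -> nat) (J : 'I_l -> {set 'I_g}) (tau : 'I_l).
Hypothesis hffs : forall t, (f t + fs t)%N = g.
Hypothesis hJ : forall t, #|J t| = f t.
Hypothesis sigma0 : sigma 0 = 0.
Hypothesis sigmaV0 : sigmaV 0 = 0.
Hypothesis max_below : forall t, (fs t < fs tau)%N -> maximal_w (J t) (f t) (fs t).

Local Notation orb n := (iter n (@ordS l) tau).
Local Notation img := (Himg sigma sigmaV J f fs tau).

(* The support bound of H_{tau,n-1} o ... o H_{tau,0}(M_tau): a step with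
   f(p^n tau^* ) >= f(tau^* ) applies F, which shrinks the bound; the other
   steps act coordinatewise and keep it. *)
Fixpoint supp_bound (n : nat) : nat :=
  match n with
  | 0 => g
  | n'.+1 => if (fs tau <= fs (orb n'))%N
             then free_below (J (orb n')) (supp_bound n')
             else supp_bound n'
  end.

(* Each F-step can only lower the bound. *)
Lemma supp_bound_nonincr (n m : nat) : (n <= m)%N -> (supp_bound m <= supp_bound n)%N.
Proof.
elim: m => [|m IH]; first by rewrite leqn0 => /eqP ->.
rewrite leq_eqVlt => /orP[/eqP -> //|hn]; apply: leq_trans (IH hn).
by rewrite /=; case: ifP => // _; exact: free_below_le.
Qed.

(* After the first step, F(M_tau) = M_{p tau, f(tau^* )}. *)
Lemma supp_bound1 : supp_bound 1 = fs tau.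
Proof.
rewrite /= leqnn /free_below.
have -> : [set x : 'I_g | (x \notin J tau) && (x < g)%N] = ~: J tau.
  by apply/setP => x; rewrite !inE ltn_ord andbT.
by apply/(@addnI (f tau)); rewrite hffs -(hJ tau) cardsC card_ord.
Qed.

Lemma Himg_supported (n : nat) (v : 'rV[k]_g) : img n v -> supported (supp_bound n) v.
Proof.
elim: n v => [|n IH] v /=; first by move=> _ m; rewrite leqNgt ltn_ord.
move=> [u [hu ->]] m; rewrite /Hmap /=.
case: ifP => hle hm; first exact: (Fmap_supported sigma0 (hJ _) (IH u hu) hm).
have hlt : (fs (orb n) < fs tau)%N by rewrite ltnNge hle.
rewrite (FVmap_maximal _ _ _ (hffs _) (max_below hlt)).
by case: ifP => _; rewrite (IH u hu) // ?sigma0 ?sigmaV0.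
Qed.

Lemma proj_Himg_vanish (v : 'rV[k]_g) (m : 'I_g) : img l v ->
  m \notin [set x : 'I_g | (x \notin J tau) && (x < supp_bound l)%N] ->
  proj (J tau) v 0 m = 0.
Proof.
move=> hv; rewrite inE negb_and negbK -leqNgt mxE.
by case/orP => [-> //|hm]; case: ifP => // _; exact: (Himg_supported hv hm).
Qed.

Lemma Himg_contains (s sV : k -> k) :
  cancel s sigma -> cancel sV sigmaV ->
  forall n, (forall n', (n' < n)%N -> (fs tau <= fs (orb n'))%N ->
                 avoids (J (orb n')) (fs tau)) ->
  forall v, supported (fs tau) v -> img n v.
Proof.
move=> sK sVK; elim=> [|n IH] hav v hv //=.
have IH' := IH (fun n' hn' => hav n' (ltnW hn')).
set t := orb n.
pose w : 'rV[k]_g := \row_m (if (m < fs tau)%N then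
   (if (m < fs t)%N then s (v 0 m) else sV (v 0 m)) else 0).
have hw : supported (fs tau) w by move=> m hm; rewrite mxE ltnNge hm.
exists w; split; first exact: IH'.
rewrite /Hmap /= -/t; apply/rowP => m.
case: (leqP (fs tau) (fs t)) => hle.
  rewrite (Fmap_avoids _ sigma0 (hav n (ltnSn n) hle) hw) mxE.
  case: (ltnP m (fs tau)) => hm; last by rewrite hv // sigma0.
  by rewrite (leq_trans hm hle) sK.
rewrite (FVmap_maximal _ _ _ (hffs _) (max_below hle)) mxE.
case: (ltnP m (fs tau)) => hm; last by rewrite hv //; case: ifP; rewrite ?sigma0 ?sigmaV0.
by case: (ltnP m (fs t)) => _; rewrite ?sK ?sVK.
Qed.

(* Hypothesis (a), in the form produced by the rank count. *)
Hypothesis hfree : (fs tau <= free_below (J tau) (supp_bound l))%N.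

Lemma supp_bound_const (n : nat) : (0 < n)%N -> (n <= l)%N -> supp_bound n = fs tau.
Proof.
move=> hn0 hnl; apply/anti_leq; rewrite -{1}supp_bound1 supp_bound_nonincr //=.
apply: leq_trans hfree _; apply: leq_trans (free_below_le _ _) _.
exact: supp_bound_nonincr.
Qed.

Lemma orbit_avoids (n : nat) : (n < l)%N -> (fs tau <= fs (orb n))%N ->
  avoids (J (orb n)) (fs tau).
Proof.
move=> hnl hle; have hdg : (fs tau <= g)%N by rewrite -(hffs tau) leq_addl.
apply: avoids_of_free_below hdg _; apply/anti_leq; rewrite free_below_le /=.
case: n hnl hle => [|n] hnl hle.
  by rewrite -{2}(supp_bound_const hnl (leqnn l)).
have step : supp_bound n.+2 = free_below (J (orb n.+1)) (supp_bound n.+1).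
  by rewrite /= hle.
rewrite -{1}(supp_bound_const (isT : 0 < n.+2)%N hnl) step.
by rewrite (supp_bound_const (isT : 0 < n.+1)%N (ltnW hnl)).
Qed.

End Orbit.

Theorem proposition4p5
  (k : closedFieldType) (p : nat) (hp : prime p) (hchar : p \in [pchar k])
  (sigmaV : {rmorphism k -> k}) (hsV : bijective sigmaV)
  (g l : nat) (hg : (0 < g)%N) (hl : (0 < l)%N)
  (f fs : 'I_l -> nat) (hffs : forall t, (f t + fs t)%N = g)
  (J : 'I_l -> {set 'I_g}) (hJ : forall t, #|J t| = f t)
  (tau : 'I_l) :
  let sigma := fun x : k => x ^+ p in
  let img := Himg sigma sigmaV J f fs tau in
  dim_is (fun u => exists v, img l v /\ u = proj (J tau) v) (fs tau) ->
  (forall t, (fs t < fs tau)%N -> maximal_w (J t) (f t) (fs t)) ->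
  [/\ (forall i, (i < l)%N -> forall v : 'rV[k]_g,
          img i.+1 v <-> (forall m : 'I_g, (fs tau <= m)%N -> v 0 m = 0)),
      maximal_w (J tau) (f tau) (fs tau) &
      (forall t, fs t = fs tau -> maximal_w (J t) (f t) (fs t))].
Proof.
move=> sigma img hdim max_below.
have sigma0 : sigma 0 = 0 by rewrite /sigma expr0n eqn0Ngt prime_gt0.
have sigmaV0 : sigmaV 0 = 0 := rmorph0 _.
have [s sK] := expr_right_inverse k (prime_gt0 hp).
have [sV _ sVK] := hsV.
have hfree : (fs tau <= free_below (J tau) (supp_bound fs J tau l))%N.
  apply: dim_le_card hdim _ => _ [v [hv ->]] m.
  exact: (proj_Himg_vanish hffs hJ sigma0 sigmaV0 max_below).
have hav := orbit_avoids hffs hJ hfree.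
split.
- move=> i hi v; split => hv.
    have := Himg_supported hffs hJ sigma0 sigmaV0 max_below hv.
    by rewrite (supp_bound_const hffs hJ hfree).
  apply: (Himg_contains hffs sigma0 sigmaV0 max_below sK sVK _ hv) => n hn.
  exact/hav/(leq_trans hn).
- exact: maximal_of_avoids (hav 0%N hl (leqnn _)) (hJ tau) (hffs tau).
- move=> t heq; have [n hn ent] := ordS_orbit tau t; rewrite -ent in heq *.
  apply: maximal_of_avoids (hJ _) (hffs _).
  by rewrite heq; apply: hav; rewrite ?heq.
Qed.
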